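(* Let $M\subsetneq F$ be a graded submodule, $\prec$ a monomial order on $F$, and $G$ a homogeneous Gröbner basis of $M$ with respect to $\prec$. Then $N_M$ admits an $l$-standard cone decomposition $Q$ such that \[ G'=\{g\in G:\deg(g)\le\max\{1+\deg(Q),\,l\}\} \] is also a Gröbner basis of $M$ with respect to $\prec$. In particular, the reduced Gröbner basis of $M$ with respect to $\prec$ has degree at most $\max\{1+\deg(Q),l\}$.
   Context: Standing notation. $S=\mathbb{K}[x_1,\dots,x_n]$ is standard graded, and $F=Se_1\oplus\cdots\oplus Se_m$ is a graded free module with $\deg(e_j)\ge0$ integers; $l=\max_j\deg(e_j)$. Monomials of $F$ are $x^\alpha e_j$ of degree $|\alpha|+\deg(e_j)$. For a monomial order $\prec$ and a submodule $M$, $N_M$ is the $\mathbb{K}$-span of the monomials of $F$ not in $\mathrm{in}_\prec(M)$. Cones. For a homogeneous $h\in F$ and $u\subseteq\{x_1,\dots,x_n\}$, the cone $C(h,u)=h\,\mathbb{K}[u]$ has degree $\deg(h)$ and dimension $|u|$. A cone decomposition of a $\mathbb{K}$-subspace $T\subseteq F$ is a finite set $P$ of cones with $T=\bigoplus_{C\in P}C$ as $\mathbb{K}$-vector spaces; $\deg(P)=\max_{C\in P}\deg(C)$, and $P^+=\{C\in P:\dim C>0\}$. $P$ is $q$-standard if (1) no $C\in P^+$ has $\deg(C)<q$, and (2) for every $C\in P^+$ and every integer $d$ with $q\le d\le\deg(C)$ there is $C'\in P$ with $\deg(C')=d$ and $\dim(C')\ge\dim(C)$. *)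

(* Multivariate polynomials are not available, so the free
   module F = S e_1 + ... + S e_m over S = K[x_1..x_n] is encoded directly:
   an element of F is a finitely supported function from monomials of F to K. *)
From HB Require Import structures.
From mathcomp Require Import all_boot all_order all_algebra.
From Stdlib Require Lists.List.
Set Implicit Arguments. Unset Strict Implicit. Unset Printing Implicit Defensive.
Import GRing.Theory.
Local Open Scope ring_scope.

Notation expv n := {ffun 'I_n -> nat}.
(* monomials x^alpha e_j of F *)
Definition mon (n m : nat) := (expv n * 'I_m)%type.
(* (possibly non-finitely-supported) coefficient functions; elements of F are
   those satisfying [finsupp] *)
Definition vec (K : fieldType) (n m : nat) := mon n m -> K.

Record cone (K : fieldType) (n m : nat) := Cone {
  cgen : vec K n m;
  cvars : {set 'I_n};
  cdeg : nat
}.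

Section Defs.
Variables (K : fieldType) (n m : nat).
Local Notation mon := (mon n m).
Local Notation vec := (vec K n m).
Local Notation cone := (cone K n m).

Definition vzero : vec := fun _ => 0.

Definition finsupp (f : vec) : Prop :=
  exists s : seq mon, forall mu, f mu != 0 -> mu \in s.

Definition mdeg (deg : 'I_m -> nat) (mu : mon) : nat :=
  (\sum_(i < n) mu.1 i + deg mu.2)%N.

Definition homog (deg : 'I_m -> nat) (f : vec) (d : nat) : Prop :=
  forall mu, f mu != 0 -> mdeg deg mu = d.

Definition deg_le (deg : 'I_m -> nat) (f : vec) (b : nat) : Prop :=
  forall mu, f mu != 0 -> (mdeg deg mu <= b)%N.

Definition mmul (g : expv n) (mu : mon) : mon :=
  ([ffun i => (g i + mu.1 i)%N], mu.2).

Definition mdvd (nu mu : mon) : bool :=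
  (nu.2 == mu.2) && [forall i, (nu.1 i <= mu.1 i)%N].

(* x^gamma * f *)
Definition shift (g : expv n) (f : vec) : vec := fun mu =>
  if [forall i, (g i <= mu.1 i)%N]
  then f ([ffun i => (mu.1 i - g i)%N], mu.2) else 0.

Definition is_submodule (M : vec -> Prop) : Prop :=
  (forall f, M f -> finsupp f) /\ M vzero /\
  (forall f g, M f -> M g -> M (fun mu => f mu + g mu)) /\
  (forall a f, M f -> M (fun mu => a * f mu)) /\
  (forall g f, M f -> M (shift g f)).

Definition homog_comp (deg : 'I_m -> nat) (d : nat) (f : vec) : vec :=
  fun mu => if mdeg deg mu == d then f mu else 0.

Definition is_graded (deg : 'I_m -> nat) (M : vec -> Prop) : Prop :=
  forall f, M f -> forall d, M (homog_comp deg d f).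

Definition is_proper_submod (M : vec -> Prop) : Prop :=
  exists f, finsupp f /\ ~ M f.

Definition is_monomial_order (lt : rel mon) : Prop :=
  irreflexive lt /\ transitive lt /\
  (forall a b, a != b -> lt a b || lt b a) /\
  (forall g a b, lt a b -> lt (mmul g a) (mmul g b)) /\
  well_founded (fun a b => lt a b).

Definition is_lm (lt : rel mon) (f : vec) (mu : mon) : Prop :=
  f mu != 0 /\ forall nu, f nu != 0 -> nu != mu -> lt nu mu.

Definition in_init (lt : rel mon) (M : vec -> Prop) (mu : mon) : Prop :=
  exists f nu, M f /\ is_lm lt f nu /\ mdvd nu mu.

Definition NM (lt : rel mon) (M : vec -> Prop) (f : vec) : Prop :=
  finsupp f /\ forall mu, f mu != 0 -> ~ in_init lt M mu.

Definition is_GB (lt : rel mon) (M : vec -> Prop) (Gs : vec -> Prop) : Prop :=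
  (forall g, Gs g -> M g) /\
  forall f mu, M f -> is_lm lt f mu ->
    exists g nu, Gs g /\ is_lm lt g nu /\ mdvd nu mu.

Definition is_reduced_GB (lt : rel mon) (M : vec -> Prop) (R : seq vec) : Prop :=
  is_GB lt M (fun g => Stdlib.Lists.List.In g R) /\
  (forall i j, (i < size R)%N -> (j < size R)%N -> i <> j ->
     forall mu nu, is_lm lt (nth vzero R j) nu -> nth vzero R i mu != 0 ->
       ~~ mdvd nu mu) /\
  (forall g, Stdlib.Lists.List.In g R -> exists nu, is_lm lt g nu /\ g nu = 1).

Definition valid_cone (deg : 'I_m -> nat) (C : cone) : Prop :=
  finsupp (cgen C) /\ (exists mu, cgen C mu != 0) /\
  homog deg (cgen C) (cdeg C).

Definition in_cone (C : cone) (c : vec) : Prop :=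
  exists s : seq (expv n * K),
    all (fun p : expv n * K => [forall i, (p.1 i != 0%N) ==> (i \in cvars C)]) s /\
    forall mu, c mu = \sum_(p <- s) p.2 * shift p.1 (cgen C) mu.

Definition cone_decomp (deg : 'I_m -> nat) (k : nat) (P : 'I_k -> cone)
    (T : vec -> Prop) : Prop :=
  (forall i, valid_cone deg (P i)) /\
  (forall t, T t <-> exists cs : 'I_k -> vec,
      (forall i, in_cone (P i) (cs i)) /\ forall mu, t mu = \sum_(i < k) cs i mu) /\
  (forall cs : 'I_k -> vec, (forall i, in_cone (P i) (cs i)) ->
      (forall mu, \sum_(i < k) cs i mu = 0) -> forall i mu, cs i mu = 0).

Definition Pdeg (k : nat) (P : 'I_k -> cone) : nat := \max_(i < k) cdeg (P i).

Definition q_standard (q : nat) (k : nat) (P : 'I_k -> cone) : Prop :=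
  (forall i, (0 < #|cvars (P i)|)%N -> (q <= cdeg (P i))%N) /\
  (forall i, (0 < #|cvars (P i)|)%N -> forall d, (q <= d <= cdeg (P i))%N ->
     exists j, cdeg (P j) = d /\ (#|cvars (P i)| <= #|cvars (P j)|)%N).

End Defs.

From HB Require Import structures.
From mathcomp Require Import all_boot all_order all_algebra.
From Stdlib Require Lists.List.
From mathcomp Require Import zify.
From Stdlib Require Import Classical.

(* A monomial is standard if it does not lie in in(M), so N_M is spanned by
   the standard monomials.  A monomial cone C(h,u) is the set of monomials
   x^a h with supp(a) in u.  The procedure SPLIT(h,u) cuts the standard part
   of C(h,u) into disjoint monomial cones: if C(h,u) is already standard (and
   deg h >= l) it is kept, otherwise a variable x_i of u is chosen and
   C(h,u) = C(h, u\{i}) + C(x_i h, u) is split recursively.  Termination uses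
   the fact that the exponents of the leading monomials of G are bounded.  Finally every
   minimal generator of in(M) has degree <= max(1 + deg Q, l), which bounds
   the elements of G needed for a Groebner basis and those of a reduced one. *)

Set Implicit Arguments. Unset Strict Implicit. Unset Printing Implicit Defensive.

Notation mcone n m := (mon n m * {set 'I_n})%type.

Section MonomialCones.
Variables (n m : nat).
Implicit Types (a b mu nu : mon n m) (g : expv n) (c : mcone n m) (u w : {set 'I_n}).

Definition mquo a b : expv n := [ffun k => b.1 k - a.1 k].

Definition unit_exp (i : 'I_n) : expv n := [ffun k => nat_of_bool (k == i)].

(* mu / x_k (meaningful when x_k divides mu) *)
Definition mdivx (k : 'I_n) mu : mon n m :=
  ([ffun i => if i == k then (mu.1 i).-1 else mu.1 i], mu.2).

Definition in_mcone c mu : bool :=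
  mdvd c.1 mu && [forall k, (k \notin c.2) ==> (mu.1 k == c.1.1 k)].

Lemma mdvdP a b : reflect (a.2 = b.2 /\ forall i, a.1 i <= b.1 i) (mdvd a b).
Proof.
rewrite /mdvd; apply: (iffP andP) => [[/eqP -> /forallP H]|[-> H]]; split=> //.
by apply/forallP.
Qed.

Lemma mdvd_refl a : mdvd a a.
Proof. by apply/mdvdP. Qed.

Lemma mdvd_trans a b (d : mon n m) : mdvd a b -> mdvd b d -> mdvd a d.
Proof.
move=> /mdvdP[e1 H1] /mdvdP[e2 H2]; apply/mdvdP; split; first by rewrite e1.
by move=> i; apply: leq_trans (H1 i) (H2 i).
Qed.

Lemma mon_eq a b : a.1 =1 b.1 -> a.2 = b.2 -> a = b.
Proof. by case: a b => [a1 a2] [b1 b2] /= /ffunP -> ->. Qed.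

Lemma mdvd_mmul a b : mdvd a b -> b = mmul (mquo a b) a.
Proof.
move=> /mdvdP[e H]; apply: mon_eq => [i|] //=.
by rewrite !ffunE subnK.
Qed.

Lemma mmul_mdvd g a : mdvd a (mmul g a).
Proof. by apply/mdvdP; split=> // i; rewrite ffunE leq_addl. Qed.

Lemma mmul0 a : mmul [ffun _ => 0] a = a.
Proof. by apply: mon_eq => //= i; rewrite !ffunE. Qed.

Lemma mdeg_mmul (deg : 'I_m -> nat) g a :
  mdeg deg (mmul g a) = \sum_(i < n) g i + mdeg deg a.
Proof.
rewrite /mdeg /= addnA; congr (_ + _).
by rewrite -big_split; apply: eq_bigr => i _; rewrite ffunE.
Qed.

Lemma mdvd_mdeg (deg : 'I_m -> nat) a b : mdvd a b -> mdeg deg a <= mdeg deg b.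
Proof. by move=> H; rewrite (mdvd_mmul H) mdeg_mmul leq_addl. Qed.

Lemma mdeg_unit_exp (deg : 'I_m -> nat) i a :
  mdeg deg (mmul (unit_exp i) a) = (mdeg deg a).+1.
Proof.
rewrite mdeg_mmul (bigD1 i) //= ffunE eqxx big1 ?addn0 // => k /negbTE Hk.
by rewrite ffunE Hk.
Qed.

Lemma mdivx_mdvd k mu : mdvd (mdivx k mu) mu.
Proof.
apply/mdvdP; split=> // i; rewrite /= ffunE; case: (i == k) => //; exact: leq_pred.
Qed.

Lemma mdeg_mdivx (deg : 'I_m -> nat) k mu : 0 < mu.1 k ->
  (mdeg deg (mdivx k mu)).+1 = mdeg deg mu.
Proof.
move=> Hk; rewrite /mdeg /= -addSn; congr (_ + _).
rewrite (bigD1 k) //= [in RHS](bigD1 k) //= ffunE eqxx -addSn prednK //.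
by congr (_ + _); apply: eq_bigr => i /negbTE Hi; rewrite ffunE Hi.
Qed.

Lemma in_mconeE h u mu : in_mcone (h, u) mu <->
  [/\ h.2 = mu.2, forall k, h.1 k <= mu.1 k & forall k, k \notin u -> mu.1 k = h.1 k].
Proof.
rewrite /in_mcone /=; split.
  move=> /andP[/mdvdP[e H] /forallP H2]; split=> // k Hk.
  by move: (H2 k); rewrite Hk => /eqP.
move=> [e H H2]; apply/andP; split; first by apply/mdvdP.
by apply/forallP => k; apply/implyP => Hk; rewrite H2.
Qed.

Lemma in_mconeP c mu : in_mcone c mu ->
  mu = mmul (mquo c.1 mu) c.1 /\ forall k, mquo c.1 mu k != 0 -> k \in c.2.
Proof.
move=> /andP[H /forallP H2]; split; first exact: mdvd_mmul.
move=> k; rewrite ffunE; apply: contraR => Hk.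
by move: (H2 k); rewrite Hk /= => /eqP ->; rewrite subnn.
Qed.

Lemma in_mcone_mmul c g : (forall k, g k != 0 -> k \in c.2) -> in_mcone c (mmul g c.1).
Proof.
move=> H; apply/andP; split; first exact: mmul_mdvd.
apply/forallP => k; apply/implyP => Hk; rewrite /= ffunE.
suff -> : g k = 0 by [].
by apply/eqP; apply: contraR Hk; apply: H.
Qed.

Lemma in_mcone_gen c : in_mcone c c.1.
Proof. by have := @in_mcone_mmul c [ffun _ => 0]; rewrite mmul0; apply=> k; rewrite ffunE. Qed.

Lemma in_mcone_mdvd c mu : in_mcone c mu -> mdvd c.1 mu.
Proof. by case/andP. Qed.

Lemma in_mcone_sub h u w mu : u \subset w -> in_mcone (h, u) mu -> in_mcone (h, w) mu.
Proof.
move=> /subsetP Hs /in_mconeE [e H1 H2]; apply/in_mconeE; split=> // k Hk.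
by apply: H2; apply: contra Hk; apply: Hs.
Qed.

(* The splitting step C(h,u) = C(h, u\{i}) + C(x_i h, u), in both directions:
   an element of C(h,u) lies in the first cone iff its i-th exponent is h_i. *)
Lemma in_mcone_fix h u i mu :
  in_mcone (h, u) mu -> mu.1 i = h.1 i -> in_mcone (h, u :\ i) mu.
Proof.
move=> /in_mconeE [e H1 H2] Hi; apply/in_mconeE; split=> // k.
rewrite in_setD1 negb_and negbK => /orP[/eqP -> //|]; exact: H2.
Qed.

Lemma in_mcone_raise h u i mu : i \in u -> in_mcone (h, u) mu -> h.1 i < mu.1 i ->
  in_mcone (mmul (unit_exp i) h, u) mu.
Proof.
move=> iu /in_mconeE [e H1 H2] Hi; apply/in_mconeE; split=> // k; rewrite /= !ffunE.
  by case: (k =P i) => [->|_] //=; rewrite add0n.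
move=> Hk; have ki : k != i by apply: contraNneq Hk => ->.
by rewrite (negbTE ki) add0n; apply: H2.
Qed.

Lemma in_mcone_fixE h u i mu :
  in_mcone (h, u :\ i) mu -> in_mcone (h, u) mu /\ mu.1 i = h.1 i.
Proof.
move=> H; split; first by apply: in_mcone_sub H; apply: subsetDl.
by move: H => /in_mconeE [_ _ H2]; apply: H2; rewrite in_setD1 eqxx.
Qed.

Lemma in_mcone_raiseE h u i mu : i \in u -> in_mcone (mmul (unit_exp i) h, u) mu ->
  in_mcone (h, u) mu /\ h.1 i < mu.1 i.
Proof.
move=> iu /in_mconeE [e H1 H2]; split.
  apply/in_mconeE; split=> // k; first by move: (H1 k); rewrite /= ffunE; lia.
  move=> Hk; have ki : k != i by apply: contraNneq Hk => ->.
  by rewrite H2 //= !ffunE (negbTE ki) add0n.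
by move: (H1 i); rewrite /= !ffunE eqxx.
Qed.

End MonomialCones.

Lemma exists_max_card_set (T : finType) (P : {set T} -> Prop) : P set0 ->
  exists w, P w /\ forall w', P w' -> #|w'| <= #|w|.
Proof.
move=> P0; apply: NNPP => H.
have Hk : forall k, exists w, P w /\ k <= #|w|.
  elim=> [|k [w [Pw Hk]]]; first by exists set0.
  have /not_all_ex_not [w' Hw'] : ~ (forall w', P w' -> #|w'| <= #|w|).
    by move=> H'; apply: H; exists w.
  have [Pw' /negP] := imply_to_and _ _ Hw'; rewrite -ltnNge => Hlt.
  by exists w'; split => //; lia.
by have [w [_]] := Hk #|T|.+1; rewrite ltnNge max_card.
Qed.

Lemma exists_min_nat (X : Type) (P : X -> Prop) (f : X -> nat) :
  (exists x, P x) -> exists x, P x /\ forall y, P y -> f x <= f y.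
Proof.
move=> [x Px].
suff : forall d x, P x -> f x <= d -> exists x, P x /\ forall y, P y -> f x <= f y.
  by move=> H; apply: (H (f x) x Px).
elim=> [|d IH] {}x {}Px Hd.
  by exists x; split=> // y _; move: Hd; rewrite leqn0 => /eqP ->.
case: (classic (exists y, P y /\ f y < f x)) => [[y [Py Hy]]|H].
  by apply: (IH y Py); lia.
exists x; split=> // y Py; rewrite leqNgt; apply/negP => Hy; apply: H; by exists y.
Qed.

Lemma lex_nat_ind (A B : Type) (cu : B -> nat) (f : A -> nat) (P : A -> B -> Prop) :
  (forall h u, (forall h' u', cu u' < cu u \/ (cu u' = cu u /\ f h' < f h) -> P h' u') ->
     P h u) ->
  forall h u, P h u.
Proof.
move=> step.
suff: forall s t h u, cu u < s -> f h < t -> P h u.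
  by move=> H h u; apply: (H (cu u).+1 (f h).+1).
elim=> [|s IHs] //.
elim=> [|t IHt] // h u Hu Ht; apply: step => h' u' [Hlt|[Heq Hlt]].
  by apply: (IHs (f h').+1) => //; lia.
by apply: IHt; lia.
Qed.

Section SplitSpec.
Variables (K : fieldType) (n m : nat) (deg : 'I_m -> nat) (lt : rel (mon n m))
  (M : vec K n m -> Prop) (l : nat).

Local Notation mon := (mon n m).
Local Notation mcone := (mcone n m).
Local Notation md := (mdeg deg).
Implicit Types (h mu nu : mon) (u w v : {set 'I_n}) (i k : 'I_n) (Q : seq mcone).

Definition standard mu := ~ in_init lt M mu.

(* mu is a minimal generator of in_lt(M): every proper divisor mu/x_k is standard *)
Definition minimal_nonstd mu := ~ standard mu /\ forall k, 0 < mu.1 k -> standard (mdivx k mu).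

Definition standard_cone h w := forall mu, in_mcone (h, w) mu -> standard mu.

Definition cones_deg Q := \max_(c <- Q) md c.1.

Definition mcones_standard q Q :=
  forall c, c \in Q -> c.2 != set0 -> q <= md c.1 /\
    forall d, q <= d <= md c.1 ->
      exists2 c', c' \in Q & md c'.1 = d /\ #|c.2| <= #|c'.2|.

Record split_spec h u Q : Prop := SplitSpec {
  split_cover : forall mu, in_mcone (h, u) mu -> standard mu -> has (fun c => in_mcone c mu) Q;
  split_disjoint : forall mu, count (fun c => in_mcone c mu) Q <= 1;
  split_inside : forall c, c \in Q ->
    c.2 \subset u /\ forall mu, in_mcone c mu -> in_mcone (h, u) mu /\ standard mu;
  split_standard : mcones_standard (maxn l (md h)) Q;
  split_maxdim : l <= md h -> forall w, w \subset u -> standard_cone h w ->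
    exists2 c, c \in Q & c.1 = h /\ #|w| <= #|c.2|;
  split_degree : forall mu, in_mcone (h, u) mu -> ~ standard mu ->
    (forall k, h.1 k < mu.1 k -> standard (mdivx k mu)) ->
    md mu <= maxn (cones_deg Q).+1 (maxn l (md h))
}.

(* in(M) is a monomial ideal: nonstandard monomials are closed under multiples *)
Lemma nonstd_mdvd mu nu : ~ standard mu -> mdvd mu nu -> ~ standard nu.
Proof.
move=> /NNPP [f [rho [Mf [Hlm Hd]]]] Hmn; apply.
by exists f, rho; split=> //; split=> //; apply: mdvd_trans Hd Hmn.
Qed.

Lemma standard_mdvd mu nu : standard nu -> mdvd mu nu -> standard mu.
Proof. by move=> Hnu Hmn Hmu; apply: (nonstd_mdvd (fun H => H Hmu) Hmn). Qed.

Lemma standard_cone0 h : standard h -> standard_cone h set0.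
Proof.
move=> Hh mu /in_mconeE [e H1 H2].
by have -> : mu = h by apply: mon_eq => // k; apply: H2; rewrite in_set0.
Qed.

(* a standard cone C(c) whose generator is a multiple of h yields the standard cone
   C(h, c.2), since every element of the latter divides one of the former *)
Lemma standard_cone_mdvd h c :
  (forall mu, in_mcone c mu -> standard mu) -> mdvd h c.1 -> standard_cone h c.2.
Proof.
move=> Hc Hd mu Hmu; have [E Hs] := in_mconeP Hmu.
apply: (standard_mdvd (Hc _ (@in_mcone_mmul _ _ c _ Hs))); rewrite {1}E.
move: Hd => /mdvdP [e H]; apply/mdvdP; split=> //= k; rewrite !ffunE leq_add2l; exact: H.
Qed.

Lemma cones_deg_cat Q1 Q2 : cones_deg (Q1 ++ Q2) = maxn (cones_deg Q1) (cones_deg Q2).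
Proof. by rewrite /cones_deg big_cat. Qed.

Lemma cones_deg_ge c Q : c \in Q -> md c.1 <= cones_deg Q.
Proof. by move=> cQ; apply: (@leq_bigmax_seq _ Q xpredT (fun c : mcone => md c.1) c). Qed.

Lemma mcones_standard_cat q Q0 Q1 :
  mcones_standard q Q0 -> mcones_standard q Q1 -> mcones_standard q (Q0 ++ Q1).
Proof.
move=> H0 H1 c; rewrite mem_cat => /orP [cQ|cQ] Hc.
  have [Hq Hd] := H0 c cQ Hc; split=> // d /Hd [c' c'Q Hc'].
  by exists c' => //; rewrite mem_cat c'Q.
have [Hq Hd] := H1 c cQ Hc; split=> // d /Hd [c' c'Q Hc'].
by exists c' => //; rewrite mem_cat c'Q orbT.
Qed.

Lemma split_spec_nonstd h u : ~ standard h -> split_spec h u [::].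
Proof.
move=> Hh; split=> //.
- by move=> mu /in_mcone_mdvd Hd Hmu; case: (nonstd_mdvd Hh Hd).
- by move=> _ w _ Hw; case: Hh; apply: Hw; apply: in_mcone_gen.
move=> mu Hmu _ Hk.
have Hd : mdvd mu h.
  move: Hmu => /in_mconeE [e H1 H2]; apply/mdvdP; split=> // k.
  rewrite leqNgt; apply/negP => Hlt; apply: (nonstd_mdvd Hh _ (Hk k Hlt)).
  apply/mdvdP; split=> // j; rewrite /= ffunE; case: eqP => [->|_]; last exact: H1.
  by move: Hlt; lia.
by apply: leq_trans (mdvd_mdeg deg Hd) _; lia.
Qed.

Lemma split_spec_single h u : standard h -> standard_cone h u ->
  (u != set0 -> l <= md h) -> split_spec h u [:: (h, u)].
Proof.
move=> Hh Hall Hl; split.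
- by move=> mu Hmu _; rewrite /= Hmu.
- by move=> mu /=; case: (in_mcone _ _).
- by move=> c; rewrite inE => /eqP -> /=; split=> // mu Hmu; split=> //; apply: Hall.
- move=> c; rewrite inE => /eqP -> /= Hu; have Hlh := Hl Hu.
  split; first by rewrite geq_max leqnn Hlh.
  move=> d; rewrite (maxn_idPr Hlh) => /andP [d1 d2].
  by exists (h, u); rewrite ?inE //; split=> //; apply/eqP; rewrite eqn_leq d1 d2.
- by move=> Hlh w Hw _; exists (h, u); rewrite ?inE //; split=> //; apply: subset_leq_card.
by move=> mu Hmu Hn; case: Hn; apply: Hall.
Qed.

Section SplitStep.
Variables (h : mon) (u : {set 'I_n}) (i : 'I_n) (Q0 Q1 : seq mcone).
Hypotheses (iu : i \in u) (Hh : standard h) (S0 : split_spec h (u :\ i) Q0)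
  (S1 : split_spec (mmul (unit_exp i) h) u Q1).

Lemma split_step_cover mu : in_mcone (h, u) mu -> standard mu ->
  has (fun c => in_mcone c mu) (Q0 ++ Q1).
Proof.
move=> Hmu Hs; rewrite has_cat; apply/orP.
case: (eqVneq (mu.1 i) (h.1 i)) => E.
  by left; apply: (split_cover S0) => //; apply: in_mcone_fix.
right; apply: (split_cover S1) => //; apply: in_mcone_raise => //.
by move: Hmu => /in_mconeE [_ H1 _]; move: (H1 i) E; lia.
Qed.

Lemma split_step_disjoint mu : count (fun c => in_mcone c mu) (Q0 ++ Q1) <= 1.
Proof.
rewrite count_cat.
have : ~~ (has (fun c => in_mcone c mu) Q0 && has (fun c => in_mcone c mu) Q1).
  apply/negP => /andP [/hasP [c cQ Hc] /hasP [c' cQ' Hc']].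
  have [_ /(_ mu Hc) [/in_mcone_fixE [_ E] _]] := split_inside S0 cQ.
  have [_ /(_ mu Hc') [/in_mcone_raiseE [] // _ Hlt _]] := split_inside S1 cQ'.
  by move: Hlt; rewrite E ltnn.
by rewrite !has_count; have := split_disjoint S0 mu; have := split_disjoint S1 mu; lia.
Qed.

Lemma split_step_inside c : c \in Q0 ++ Q1 ->
  c.2 \subset u /\ forall mu, in_mcone c mu -> in_mcone (h, u) mu /\ standard mu.
Proof.
rewrite mem_cat => /orP [cQ|cQ].
  have [Hs Hc] := split_inside S0 cQ.
  split; first by apply: subset_trans Hs (subsetDl _ _).
  by move=> mu /Hc [/in_mcone_fixE [H _] Hst].
have [Hs Hc] := split_inside S1 cQ.
by split=> // mu /Hc [/in_mcone_raiseE [] // H _ Hst].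
Qed.

Lemma split_step_degree mu : in_mcone (h, u) mu -> ~ standard mu ->
  (forall k, h.1 k < mu.1 k -> standard (mdivx k mu)) ->
  md mu <= maxn (cones_deg (Q0 ++ Q1)).+1 (maxn l (md h)).
Proof.
move=> Hmu Hn Hk; rewrite cones_deg_cat.
case: (eqVneq (mu.1 i) (h.1 i)) => E.
  by have := split_degree S0 (in_mcone_fix Hmu E) Hn Hk; lia.
have Hlt : h.1 i < mu.1 i.
  by move: Hmu => /in_mconeE [_ H1 _]; move: (H1 i) E; lia.
have Hk' : forall k, (mmul (unit_exp i) h).1 k < mu.1 k -> standard (mdivx k mu).
  by move=> k Hk2; apply: Hk; move: Hk2; rewrite /= ffunE; lia.
have := split_degree S1 (in_mcone_raise iu Hmu Hlt) Hn Hk'; rewrite mdeg_unit_exp.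
(* when deg h >= l, the cone of Q0 generated by h forces deg h <= deg Q0 *)
have Hhq : (md h).+1 <= maxn (maxn (cones_deg Q0) (cones_deg Q1)).+1 (maxn l (md h)).
  case: (leqP l (md h)) => Hl; last by lia.
  have [c cQ [c1 _]] := split_maxdim S0 Hl (sub0set _) (standard_cone0 Hh).
  by have := cones_deg_ge cQ; rewrite c1; lia.
lia.
Qed.

(* Below degree l any variable may be split off. *)
Lemma split_step_low : md h < l -> split_spec h u (Q0 ++ Q1).
Proof.
move=> Hl; split.
- exact: split_step_cover.
- exact: split_step_disjoint.
- exact: split_step_inside.
- have E0 : maxn l (md h) = l by apply/maxn_idPl; apply: ltnW.
  have E1 : maxn l (md (mmul (unit_exp i) h)) = l by apply/maxn_idPl; rewrite mdeg_unit_exp.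
  rewrite E0; apply: mcones_standard_cat.
    by rewrite -{1}E0; apply: split_standard S0.
  by rewrite -E1; apply: split_standard S1.
- by rewrite leqNgt Hl.
exact: split_step_degree.
Qed.

(* In degree >= l, the variable i must be outside a standard subcone C(h,w) of
   maximal dimension: then Q0 contains a cone of generator h and dimension |w|,
   which fills the degree deg h needed for the cones of Q1 to be standard. *)
Lemma split_step_high w : l <= md h -> w \subset u -> standard_cone h w -> i \notin w ->
  (forall v, v \subset u -> standard_cone h v -> #|v| <= #|w|) ->
  split_spec h u (Q0 ++ Q1).
Proof.
move=> Hl wu Hw iw Hmax.
have wu' : w \subset u :\ i.
  apply/subsetP => k kw; rewrite in_setD1 (subsetP wu) // andbT.
  by apply: contraNneq iw => <-.
have [c0 c0Q [c01 Hc0]] := split_maxdim S0 Hl wu' Hw.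
split.
- exact: split_step_cover.
- exact: split_step_disjoint.
- exact: split_step_inside.
- have E0 : maxn l (md h) = md h by apply/maxn_idPr.
  have E1 : maxn l (md (mmul (unit_exp i) h)) = (md h).+1.
    by rewrite mdeg_unit_exp; apply/maxn_idPr; apply: leqW.
  rewrite E0 => c; rewrite mem_cat => /orP [cQ|cQ] Hc.
    have := split_standard S0 cQ Hc; rewrite E0 => -[Hq Hd]; split=> // d /Hd [c' c'Q Hc'].
    by exists c' => //; rewrite mem_cat c'Q.
  have := split_standard S1 cQ Hc; rewrite E1 => -[Hq Hd]; split; first exact: ltnW.
  have [Hcu Hcin] := split_inside S1 cQ.
  move=> d /andP [d1 d2]; case: (eqVneq d (md h)) => Ed.
    exists c0; first by rewrite mem_cat c0Q.
    split; first by rewrite c01 Ed.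
    apply: leq_trans Hc0; apply: Hmax => //.
    apply: standard_cone_mdvd => [mu /Hcin [] //|].
    by have [/(in_mcone_raiseE iu) [/in_mcone_mdvd]] := Hcin _ (in_mcone_gen c).
  have [c' c'Q Hc'] : exists2 c', c' \in Q1 & md c'.1 = d /\ #|c.2| <= #|c'.2|.
    by apply: Hd; rewrite d2 andbT; move: d1 Ed; lia.
  by exists c' => //; rewrite mem_cat c'Q orbT.
- move=> _ v vu Hv; exists c0; first by rewrite mem_cat c0Q.
  by split=> //; apply: leq_trans (Hmax v vu Hv) Hc0.
exact: split_step_degree.
Qed.

End SplitStep.

End SplitSpec.

Section SplitExists.
Variables (K : fieldType) (n m : nat) (deg : 'I_m -> nat) (lt : rel (mon n m))
  (M : vec K n m -> Prop) (G : seq (vec K n m)) (l B : nat).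
Hypothesis HGB : is_GB lt M (fun g => List.In g G).
Hypothesis HB : forall g, List.In g G -> forall nu, g nu != 0%R -> forall k, nu.1 k < B.

Local Notation mon := (mon n m).
Local Notation md := (mdeg deg).
Local Notation standard := (standard lt M).
Local Notation standard_cone := (standard_cone lt M).
Local Notation split_spec := (split_spec deg lt M l).
Implicit Types (h mu nu : mon) (u w v : {set 'I_n}) (i k : 'I_n).

Lemma nonstd_lmG mu : ~ standard mu ->
  exists g nu, List.In g G /\ is_lm lt g nu /\ mdvd nu mu.
Proof.
move=> /NNPP [f [nu [Mf [Hlm Hd]]]].
have [g [nu' [Gg [Hlm' Hd']]]] := HGB.2 f nu Mf Hlm.
by exists g, nu'; split=> //; split=> //; apply: mdvd_trans Hd' Hd.
Qed.

Lemma lmG_nonstd g nu mu : List.In g G -> is_lm lt g nu -> mdvd nu mu -> ~ standard mu.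
Proof. by move=> Gg Hlm Hd; apply; exists g, nu; split=> //; apply: HGB.1. Qed.

(* If C(h,w) is a standard subcone of C(h,u) of maximal dimension and x_i in u is
   not in w, then h_i < B: otherwise no leading monomial of G can see the i-th
   exponent, so C(h, w + {i}) would be standard as well. *)
Lemma max_standard_cone_exp h u w i : w \subset u -> standard_cone h w ->
  i \in u -> i \notin w ->
  (forall v, v \subset u -> standard_cone h v -> #|v| <= #|w|) -> h.1 i < B.
Proof.
move=> wu Hw iu iw Hmax; rewrite ltnNge; apply/negP => HBi.
suff Hiw : standard_cone h (i |: w).
  have := Hmax (i |: w); rewrite subUset sub1set iu wu => /(_ isT Hiw).
  by rewrite cardsU1 iw ltnn.
move=> mu /in_mconeE [e H1 H2] Hn; have [g [nu [Gg [Hlm Hd]]]] := nonstd_lmG (fun H => H Hn).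
pose mu' : mon := ([ffun k => if k == i then h.1 i else mu.1 k], mu.2).
apply: (lmG_nonstd Gg Hlm (mu := mu')).
  move: Hd => /mdvdP [e' H]; apply/mdvdP; split=> // k; rewrite /mu' /= ffunE.
  case: eqP => [->|_]; last exact: H.
  by apply: ltnW; apply: leq_trans (HB Gg Hlm.1 i) HBi.
apply: Hw; apply/in_mconeE; split=> // k; rewrite /mu' /= ffunE.
  by case: eqP => [->|].
case: eqP => [->|/eqP ki] // kw; apply: H2.
by rewrite in_setU1 negb_or ki.
Qed.

(* the termination measure of SPLIT for a fixed variable set *)
Definition split_measure h := (l - md h) + \sum_(k < n) (B - h.1 k).

Lemma split_measure_raise h i : md h < l \/ h.1 i < B ->
  split_measure (mmul (unit_exp i) h) < split_measure h.
Proof.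
move=> Hi; rewrite /split_measure mdeg_unit_exp.
rewrite [X in _ + X < _](bigD1 i) //= [X in _ < _ + X](bigD1 i) //= !ffunE eqxx.
rewrite (eq_bigr (fun k => B - h.1 k)) => [|k /negbTE ki]; last by rewrite !ffunE ki.
lia.
Qed.

Lemma split_spec_exists h u : exists Q, split_spec h u Q.
Proof.
move: h u; apply: (@lex_nat_ind _ _ (fun u : {set 'I_n} => #|u|) split_measure) => h u IH.
case: (classic (standard h)) => Hh; last by exists [::]; apply: split_spec_nonstd.
have split_at i : i \in u -> md h < l \/ h.1 i < B ->
    exists Q0 Q1, split_spec h (u :\ i) Q0 /\ split_spec (mmul (unit_exp i) h) u Q1.
  move=> iu Hi; have Hc : #|u :\ i| < #|u| by rewrite [X in _ < X](cardsD1 i) iu.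
  have [Q0 S0] := IH h (u :\ i) (or_introl Hc).
  have [Q1 S1] := IH (mmul (unit_exp i) h) u (or_intror (conj erefl (split_measure_raise Hi))).
  by exists Q0, Q1.
case: (leqP l (md h)) => Hl.
  case: (classic (standard_cone h u)) => Ha; first by exists [:: (h, u)]; apply: split_spec_single.
  have [w [[wu Hw] Hmax]] := @exists_max_card_set _ (fun v => v \subset u /\ standard_cone h v)
    (conj (sub0set u) (standard_cone0 Hh)).
  have /subsetPn [i iu iw] : ~~ (u \subset w).
    by apply/negP => H; apply: Ha => mu Hmu; apply: Hw; apply: in_mcone_sub H Hmu.
  have Hmax' v : v \subset u -> standard_cone h v -> #|v| <= #|w| by move=> ? ?; apply: Hmax.
  have [Q0 [Q1 [S0 S1]]] := split_at i iu (or_intror (max_standard_cone_exp wu Hw iu iw Hmax')).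
  by exists (Q0 ++ Q1); apply: (split_step_high iu Hh S0 S1 Hl wu Hw iw).
case: (set_0Vmem u) => [->|[i iu]].
  by exists [:: (h, set0)]; apply: split_spec_single => //; [apply: standard_cone0 | rewrite eqxx].
have [Q0 [Q1 [S0 S1]]] := split_at i iu (or_introl Hl).
by exists (Q0 ++ Q1); apply: split_step_low S0 S1 Hl.
Qed.

End SplitExists.

Section GlobalDecomposition.
Variables (K : fieldType) (n m : nat) (deg : 'I_m -> nat) (lt : rel (mon n m))
  (M : vec K n m -> Prop) (l : nat).

Local Notation mon := (mon n m).
Local Notation mcone := (mcone n m).
Local Notation md := (mdeg deg).
Local Notation standard := (standard lt M).

Record std_decomposition (Q : seq mcone) : Prop := StdDecomposition {
  sd_cover : forall mu, standard mu -> has (fun c => in_mcone c mu) Q;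
  sd_disjoint : forall mu, count (fun c => in_mcone c mu) Q <= 1;
  sd_standard : forall c, c \in Q -> forall mu, in_mcone c mu -> standard mu;
  sd_lstandard : mcones_standard deg l Q;
  sd_degree : forall nu, minimal_nonstd lt M nu -> md nu <= maxn (cones_deg deg Q).+1 l
}.

Definition basis_mon (j : 'I_m) : mon := ([ffun _ => 0], j).

Lemma mdeg_basis_mon j : md (basis_mon j) = deg j.
Proof. by rewrite /mdeg big1 // => i _; rewrite ffunE. Qed.

Lemma in_basis_mcone mu : in_mcone (basis_mon mu.2, setT) mu.
Proof. by apply/in_mconeE; split=> // k; rewrite ?ffunE ?in_setT. Qed.

Lemma in_basis_mconeE j mu : in_mcone (basis_mon j, setT) mu -> j = mu.2.
Proof. by move=> /in_mconeE []. Qed.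

Variables (G : seq (vec K n m)) (B : nat).
Hypothesis HGB : is_GB lt M (fun g => List.In g G).
Hypothesis HB : forall g, List.In g G -> forall nu, g nu != 0%R -> forall k, nu.1 k < B.
Hypothesis Hl : forall j, deg j <= l.

Lemma std_decomposition_exists : exists Q, std_decomposition Q.
Proof.
have [f Hf] := fin_all_exists (fun j => split_spec_exists deg l HGB HB (basis_mon j) setT).
pose Q := flatten [seq f j | j <- enum 'I_m].
have memQ j c : c \in f j -> c \in Q.
  by move=> cf; apply/flattenP; exists (f j) => //; apply: map_f; rewrite mem_enum.
have memQ' c : c \in Q -> exists2 j, c \in f j & split_spec deg lt M l (basis_mon j) setT (f j).
  by move=> /flattenP [s /mapP [j _ ->] cs]; exists j.
have El j : maxn l (md (basis_mon j)) = l by rewrite mdeg_basis_mon; apply/maxn_idPl.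
exists Q; split.
- move=> mu Hmu.
  have [c cf Hc] := hasP (split_cover (Hf mu.2) (in_basis_mcone mu) Hmu).
  by apply/hasP; exists c => //; apply: memQ cf.
- move=> mu; rewrite count_flatten sumnE !big_map (bigD1 mu.2) //= big1 ?addn0.
    exact: split_disjoint (Hf mu.2) mu.
  move=> j ji; apply/eqP; rewrite -leqn0 leqNgt -has_count; apply/negP => /hasP [c cf Hc].
  have [_ /(_ mu Hc) [/in_basis_mconeE E _]] := split_inside (Hf j) cf.
  by move: ji; rewrite E eqxx.
- move=> c /memQ' [j cf Sj] mu Hmu.
  by have [_ /(_ mu Hmu) [_ H]] := split_inside Sj cf.
- move=> c /memQ' [j cf Sj] Hc; have := split_standard Sj cf Hc; rewrite El => -[Hq Hd].
  by split=> // d /Hd [c' c'f Hc']; exists c' => //; exact: memQ c'f.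
move=> nu [Hn Hk].
have Hk' k : (basis_mon nu.2).1 k < nu.1 k -> standard (mdivx k nu).
  by rewrite /= ffunE; apply: Hk.
have := split_degree (Hf nu.2) (in_basis_mcone nu) Hn Hk'; rewrite El.
have : cones_deg deg (f nu.2) <= cones_deg deg Q.
  by apply/bigmax_leqP_seq => c cf _; apply: cones_deg_ge; apply: memQ cf.
lia.
Qed.

End GlobalDecomposition.

Import GRing.Theory.

Section ConeRecords.
Variables (K : fieldType) (n m : nat) (deg : 'I_m -> nat) (lt : rel (mon n m))
  (M : vec K n m -> Prop).

Local Notation mon := (mon n m).
Local Notation mcone := (mcone n m).
Local Notation md := (mdeg deg).
Local Notation standard := (standard lt M).

Definition mon_vec (mu : mon) : vec K n m := fun nu => if nu == mu then 1%R else 0%R.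

Definition to_cone (c : mcone) : cone K n m := Cone (mon_vec c.1) c.2 (md c.1).

Lemma shift_mon_vec g mu nu : shift g (mon_vec mu) nu = mon_vec (mmul g mu) nu.
Proof.
rewrite /shift /mon_vec; case: forallP => H.
  suff -> : (([ffun i => nu.1 i - g i], nu.2) == mu) = (nu == mmul g mu) by [].
  apply/eqP/eqP => [<-|->]; apply: mon_eq => //= i; rewrite !ffunE.
    by rewrite subnKC.
  by rewrite addKn.
by case: eqP => // E; case: H => i; rewrite E /= ffunE leq_addr.
Qed.

Lemma valid_to_cone c : valid_cone deg (to_cone c).
Proof.
split.
  exists [:: c.1] => nu; rewrite /= /mon_vec.
  by case: (eqVneq nu c.1) => [->|]; rewrite ?inE ?eqxx.
split; first by exists c.1; rewrite /= /mon_vec eqxx oner_eq0.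
by move=> nu; rewrite /= /mon_vec; case: (eqVneq nu c.1) => [->|]; rewrite ?eqxx.
Qed.

Lemma in_to_cone c v : in_cone (to_cone c) v ->
  (forall nu, v nu != 0%R -> in_mcone c nu) /\ finsupp v.
Proof.
move=> [s [Hall Hv]].
have key nu : v nu != 0%R -> exists2 p, p \in s & nu = mmul p.1 c.1.
  rewrite Hv => Hnz.
  suff /hasP [p ps /eqP E] : has (fun p : expv n * K => nu == mmul p.1 c.1) s by exists p.
  apply/negPn/negP => Hn; move: Hnz.
  rewrite big_seq big1 ?eqxx // => p ps; rewrite shift_mon_vec /mon_vec.
  case: eqP => E; last by rewrite mulr0.
  by case/negP: Hn; apply/hasP; exists p => //; apply/eqP.
split.
  move=> nu /key [p ps ->]; apply: in_mcone_mmul => k Hk.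
  by move: (allP Hall p ps) => /= /forallP /(_ k) /implyP; apply.
by exists [seq mmul p.1 c.1 | p <- s] => nu /key [p ps ->]; exact: map_f.
Qed.

Lemma sum_mon_vec (L : seq mon) (F : mon -> K) nu : uniq L ->
  (\sum_(mu <- L) F mu * mon_vec mu nu = if nu \in L then F nu else 0)%R.
Proof.
elim: L => [|x L IH] /=; first by rewrite big_nil.
move=> /andP [xL uL]; rewrite big_cons IH // inE /mon_vec.
case: (eqVneq nu x) => [->|ne] /=; first by rewrite (negbTE xL) mulr1 addr0.
by rewrite mulr0 add0r.
Qed.

Lemma sum_if_count (Q : seq mcone) (p : pred mcone) (a : K) :
  (\sum_(c <- Q) (if p c then a else 0) = a *+ count p Q)%R.
Proof.
elim: Q => [|c Q IH]; first by rewrite big_nil.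
by rewrite big_cons IH /=; case: (p c); rewrite ?add0r // mulrS.
Qed.

Variable Q : seq mcone.
Hypothesis Hcover : forall mu, standard mu -> has (fun c => in_mcone c mu) Q.
Hypothesis Hdisjoint : forall mu, count (fun c => in_mcone c mu) Q <= 1.
Hypothesis Hstandard : forall c, c \in Q -> forall mu, in_mcone c mu -> standard mu.

Local Notation tQ := (tnth (in_tuple Q)).

Definition cones_of (i : 'I_(size Q)) := to_cone (tQ i).

Lemma NM_sum_cones t : NM lt M t -> exists cs : 'I_(size Q) -> vec K n m,
  (forall i, in_cone (cones_of i) (cs i)) /\ forall mu, t mu = (\sum_(i < size Q) cs i mu)%R.
Proof.
move=> [[s Hs] Hst].
exists (fun i mu => if in_mcone (tQ i) mu then t mu else 0%R); split.
  move=> i; pose c := tQ i; pose L := undup (filter (in_mcone c) s).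
  exists [seq (mquo c.1 mu, t mu) | mu <- L]; split.
    apply/allP => p /mapP [mu muL ->] /=; apply/forallP => k; apply/implyP.
    move: muL; rewrite mem_undup mem_filter => /andP [Hmu _].
    by have [_ H] := in_mconeP Hmu; apply: H.
  move=> nu; rewrite big_map.
  rewrite (eq_big_seq (fun mu => t mu * mon_vec mu nu)%R) => [|mu].
    rewrite sum_mon_vec ?undup_uniq // mem_undup mem_filter -/c.
    case: (in_mcone c nu) => //=; case: ifP => // ns.
    by apply/eqP; apply: contraFT ns => /Hs.
  rewrite mem_undup mem_filter => /andP [Hmu _].
  by rewrite /= shift_mon_vec; have [<- _] := in_mconeP Hmu.
move=> nu; rewrite -(big_tnth _ _ _ xpredT (fun c => if in_mcone c nu then t nu else 0%R)).
rewrite sum_if_count; case: (eqVneq (t nu) 0%R) => [->|tn]; first by rewrite mul0rn.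
have := Hdisjoint nu; have := Hcover (Hst nu tn); rewrite has_count.
by case: (count _ _) => [|[|k]] //= _ _; rewrite mulr1n.
Qed.

Lemma sum_cones_NM (cs : 'I_(size Q) -> vec K n m) :
  (forall i, in_cone (cones_of i) (cs i)) -> NM lt M (fun mu => \sum_(i < size Q) cs i mu)%R.
Proof.
move=> Hcs.
have [sf Hsf] : exists sf : 'I_(size Q) -> seq mon, forall i nu, cs i nu != 0%R -> nu \in sf i.
  apply: (fin_all_exists (P := fun i s => forall nu, cs i nu != 0%R -> nu \in s)).
  by move=> i; have [_ [s Hs]] := in_to_cone (Hcs i); exists s.
have nz nu : (\sum_(i < size Q) cs i nu)%R != 0%R -> exists i, cs i nu != 0%R.
  move=> Hnz; apply/existsP; apply: contraR Hnz => /existsPn H.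
  by rewrite big1 // => i _; apply/eqP; move: (H i); rewrite negbK.
split.
  exists (flatten [seq sf i | i <- enum 'I_(size Q)]) => nu /nz [i Hi].
  by apply/flattenP; exists (sf i); [apply: map_f; rewrite mem_enum | exact: Hsf].
move=> nu /nz [i Hi]; have [H _] := in_to_cone (Hcs i).
exact: (Hstandard (mem_tnth i (in_tuple Q)) (H nu Hi)).
Qed.

(* the sum is direct, since the monomial cones of Q are pairwise disjoint *)
Lemma sum_cones_direct (cs : 'I_(size Q) -> vec K n m) :
  (forall i, in_cone (cones_of i) (cs i)) ->
  (forall mu, \sum_(i < size Q) cs i mu = 0)%R -> forall i mu, cs i mu = 0%R.
Proof.
move=> Hcs Hsum i mu; apply/eqP; apply: contraT => Hnz.
have Hcsj j : j != i -> cs j mu = 0%R.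
  move=> ji; apply/eqP; apply: contraT => Hj.
  have := Hdisjoint mu; rewrite -sum1_count big_tnth (bigD1 i) /=; last first.
    by have [H _] := in_to_cone (Hcs i); apply: H.
  rewrite (bigD1 j) /=; first by rewrite addnA ltnNge leq_addr.
  by have [H _] := in_to_cone (Hcs j); rewrite H // ji.
move: (Hsum mu); rewrite (bigD1 i) //= big1 ?addr0 => [E|]; last exact: Hcsj.
by move: Hnz; rewrite E eqxx.
Qed.

Lemma cone_decomp_cones_of : cone_decomp deg cones_of (NM lt M).
Proof.
split; first by move=> i; apply: valid_to_cone.
split; last exact: sum_cones_direct.
move=> t; split; first exact: NM_sum_cones.
move=> [cs [Hcs Ht]]; have [[s Hs] Hst] := sum_cones_NM Hcs.
by split; [exists s|]; move=> mu; rewrite Ht; [apply: Hs | apply: Hst].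
Qed.

Lemma Pdeg_cones_of : Pdeg cones_of = cones_deg deg Q.
Proof. by rewrite /Pdeg /cones_deg (big_tnth _ _ _ xpredT (fun c : mcone => md c.1)). Qed.

Lemma q_standard_cones_of l : mcones_standard deg l Q -> q_standard l cones_of.
Proof.
move=> H; split.
  by move=> i; rewrite card_gt0 => Hi; have [] := H _ (mem_tnth i (in_tuple Q)) Hi.
move=> i; rewrite card_gt0 => Hi d Hd.
have [_ /(_ d Hd) [c' c'Q [E Hc]]] := H _ (mem_tnth i (in_tuple Q)) Hi.
by have [j Ej] := seq_tnthP c'Q; exists j; rewrite /cones_of /= -Ej.
Qed.

End ConeRecords.

Arguments cones_of {K n m} deg Q i.

Section LeadingMonomials.
Variables (K : fieldType) (n m : nat) (lt : rel (mon n m)).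
Hypothesis Hord : is_monomial_order lt.

Local Notation mon := (mon n m).

Lemma lm_unique (f : vec K n m) a b : is_lm lt f a -> is_lm lt f b -> a = b.
Proof.
move=> [Ha Ha'] [Hb Hb']; apply/eqP; apply: contraT => ab.
have H1 := Hb' a Ha ab; have H2 := Ha' b Hb (ltac:(by rewrite eq_sym)).
by have := Hord.2.1 _ _ _ H1 H2; rewrite Hord.1.
Qed.

Lemma lt_max_in_seq (S : seq mon) : S != [::] ->
  exists2 x, x \in S & forall y, y \in S -> y != x -> lt y x.
Proof.
elim: S => // a S IH _; case: S IH => [|b S'] IH.
  by exists a; rewrite ?inE // => y; rewrite inE => ->.
have [x xS Hx] := IH isT.
case: (eqVneq a x) => [->|ax].
  exists x; first by rewrite inE eqxx.
  by move=> y; rewrite inE => /orP [/eqP ->|yS]; [rewrite eqxx | apply: Hx].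
case/orP: (Hord.2.2.1 a x ax) => H.
  exists x; first by rewrite inE xS orbT.
  by move=> y; rewrite inE => /orP [/eqP -> _|yS]; [exact: H | apply: Hx].
exists a; first by rewrite inE eqxx.
move=> y; rewrite inE => /orP [/eqP ->|yS]; first by rewrite eqxx.
move=> ya; case: (eqVneq y x) => [->|yx] //.
exact: Hord.2.1 (Hx y yS yx) H.
Qed.

Lemma lm_exists (f : vec K n m) mu0 : finsupp f -> f mu0 != 0%R -> exists mu, is_lm lt f mu.
Proof.
move=> [s Hs] H0.
have : [seq x <- s | f x != 0%R] != [::].
  apply/eqP => E; have : mu0 \in [seq x <- s | f x != 0%R] by rewrite mem_filter H0 Hs.
  by rewrite E.
move=> /lt_max_in_seq [x]; rewrite mem_filter => /andP [Hx _] H.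
by exists x; split=> // nu Hnu; apply: H; rewrite mem_filter Hnu; exact: Hs.
Qed.

(* a monomial is never larger than its multiples: otherwise the iterated
   multiples would form an infinite descending chain *)
Lemma not_lt_mmul g nu : ~ lt (mmul g nu) nu.
Proof.
move=> H; pose c k := iter k (mmul g) nu.
have chain k : lt (c k.+1) (c k) by elim: k => [|k IH] //; exact: Hord.2.2.2.1 IH.
suff : forall x, Acc (fun a b => lt a b) x -> forall k, x <> c k.
  by move=> /(_ nu (Hord.2.2.2.2 nu) 0); apply.
move=> x; elim=> {}x _ IHx k Ex.
by apply: (IHx (c k.+1)) (erefl _); rewrite Ex; apply: chain.
Qed.

End LeadingMonomials.

Lemma seq_exponent_bound (K : fieldType) (n m : nat) (G : seq (vec K n m)) :
  (forall g, List.In g G -> finsupp g) ->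
  exists B, forall g, List.In g G -> forall nu, g nu != 0%R -> forall k, nu.1 k < B.
Proof.
elim: G => [|g G IH] HG; first by exists 0.
have [B HB] := IH (fun g' H => HG g' (or_intror H)).
have [s Hs] := HG g (or_introl erefl).
exists (maxn B (\max_(nu <- s) \max_(k < n) (nu.1 k).+1)) => g' [<-|Hg'] nu Hnu k.
  rewrite leq_max; apply/orP; right.
  apply: leq_trans (@leq_bigmax_seq _ s xpredT
    (fun nu : mon n m => \max_(k < n) (nu.1 k).+1) nu (Hs nu Hnu) isT).
  exact: (@leq_bigmax _ (fun k : 'I_n => (nu.1 k).+1) k).
by have := HB g' Hg' nu Hnu k; lia.
Qed.

Lemma In_nth (T : Type) (x0 x : T) s :
  List.In x s -> exists2 i, i < size s & nth x0 s i = x.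
Proof.
elim: s => [|a s IH] //= [->|/IH [i Hi E]]; first by exists 0.
by exists i.+1.
Qed.

Section DegreeBounds.
Variables (K : fieldType) (n m : nat) (deg : 'I_m -> nat) (lt : rel (mon n m))
  (M : vec K n m -> Prop) (b : nat).
Hypothesis Hord : is_monomial_order lt.
Hypothesis Hmin : forall nu, minimal_nonstd lt M nu -> mdeg deg nu <= b.

Local Notation mon := (mon n m).
Local Notation md := (mdeg deg).
Local Notation standard := (standard lt M).

Lemma GB_minimal_lm (G : vec K n m -> Prop) f mu : is_GB lt M G -> M f -> is_lm lt f mu ->
  exists g nu, [/\ G g, is_lm lt g nu, mdvd nu mu & minimal_nonstd lt M nu].
Proof.
move=> HGB Mf Hlm.
have [g0 [nu0 [Gg0 [Hlm0 Hd0]]]] := HGB.2 f mu Mf Hlm.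
have [[g nu] [[/= Gg [Hlmg Hd]] Hleast]] := @exists_min_nat _
  (fun p : vec K n m * mon => G p.1 /\ is_lm lt p.1 p.2 /\ mdvd p.2 mu)
  (fun p => md p.2) (ex_intro _ (g0, nu0) (conj Gg0 (conj Hlm0 Hd0))).
exists g, nu; split=> //; split.
  by apply; exists g, nu; split; [apply: HGB.1 | split=> //; apply: mdvd_refl].
move=> k Hk [f' [rho [Mf' [Hlm' Hd']]]].
have [g' [rho' [Gg' [Hlmg' Hd'']]]] := HGB.2 f' rho Mf' Hlm'.
have Hdv : mdvd rho' (mdivx k nu) := mdvd_trans Hd'' Hd'.
have := Hleast (g', rho') (conj Gg' (conj Hlmg'
  (mdvd_trans Hdv (mdvd_trans (mdivx_mdvd k nu) Hd)))).
by have := mdvd_mdeg deg Hdv; have := mdeg_mdivx deg Hk; rewrite /=; lia.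
Qed.

Lemma GB_truncate (G : vec K n m -> Prop) : is_GB lt M G ->
  (forall g, G g -> exists d, homog deg g d) ->
  is_GB lt M (fun g => G g /\ deg_le deg g b).
Proof.
move=> HGB Hhom; split; first by move=> g [Gg _]; apply: HGB.1.
move=> f mu Mf Hlm; have [g [nu [Gg Hlmg Hd Hmn]]] := GB_minimal_lm HGB Mf Hlm.
exists g, nu; split=> //; split=> // mu' Hmu'.
have [d Hdg] := Hhom g Gg.
by rewrite (Hdg mu' Hmu') -(Hdg nu Hlmg.1); apply: Hmin.
Qed.

Section ReducedGB.
Variables (R : seq (vec K n m)) (g : vec K n m) (nu : mon).
Hypotheses (HR : is_reduced_GB lt M R) (Rg : List.In g R) (Hlm : is_lm lt g nu).

(* no monomial of g is divisible by the leading monomial of another element of R,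
   so the nonstandard divisors of monomials of g are multiples of lm(g) *)
Lemma reduced_GB_lm_mdvd rho sigma :
  ~ standard rho -> mdvd rho sigma -> g sigma != 0%R -> mdvd nu rho.
Proof.
have [HRgb [Hred _]] := HR.
move=> /NNPP [f [rho0 [Mf [Hlm0 Hd0]]]] Hrs Hs.
have [r' [nu' [Hr' [Hlm' Hd']]]] := HRgb.2 f rho0 Mf Hlm0.
have [i Hi Ei] := In_nth (vzero K (n:=n) (m:=m)) Rg.
have [j Hj Ej] := In_nth (vzero K (n:=n) (m:=m)) Hr'.
case: (eqVneq i j) => [Eij|Nij].
  have E : nu' = nu by apply: (lm_unique Hord (f := g)) => //; rewrite -Ei Eij Ej.
  by rewrite -E; apply: mdvd_trans Hd' Hd0.
have Nij' : i <> j by move=> E; move: Nij; rewrite E eqxx.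
have := Hred i j Hi Hj Nij' sigma nu'; rewrite Ej Ei => /(_ Hlm' Hs).
by rewrite (mdvd_trans Hd' (mdvd_trans Hd0 Hrs)).
Qed.

Lemma reduced_GB_lm_minimal : minimal_nonstd lt M nu.
Proof.
have Mg : M g := HR.1.1 g Rg.
split; first by apply; exists g, nu; split=> //; split=> //; apply: mdvd_refl.
move=> k Hk Hs.
have := reduced_GB_lm_mdvd (fun H => H Hs) (mdivx_mdvd k nu) Hlm.1.
by move=> /(mdvd_mdeg deg); have := mdeg_mdivx deg Hk; lia.
Qed.

(* For a graded M, each element of the reduced Groebner basis is homogeneous:
   otherwise g minus its component of degree deg(lm g) is an element of M whose
   leading monomial is a multiple of lm(g) smaller than lm(g). *)
Lemma reduced_GB_homog : is_submodule M -> is_graded deg M ->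
  forall mu, g mu != 0%R -> md mu = md nu.
Proof.
move=> [Hfs [_ [Hadd [Hsc _]]]] Hgr mu Hmu; apply/eqP; apply: contraT => Hne.
have Mg : M g := HR.1.1 g Rg.
pose r := fun x => (g x + (-1) * homog_comp deg (md nu) g x)%R.
have Mr : M r by apply: (Hadd g _ Mg); apply: Hsc; apply: Hgr.
have rE x : r x = if md x == md nu then 0%R else g x.
  by rewrite /r /homog_comp; case: eqP => _; rewrite ?mulr0 ?addr0 // mulN1r subrr.
have [rho Hrho] : exists rho, is_lm lt r rho.
  by apply: (lm_exists Hord (mu0 := mu)); [apply: Hfs | rewrite rE (negbTE Hne)].
have := Hrho.1; rewrite rE; case: ifP => [_|/eqP Hdeg Hgrho]; first by rewrite eqxx.
have Hdv : mdvd nu rho.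
  apply: (reduced_GB_lm_mdvd _ (mdvd_refl rho) Hgrho).
  by apply; exists r, rho; split=> //; split=> //; apply: mdvd_refl.
have Hne2 : rho != nu by apply/eqP => E; apply: Hdeg; rewrite E.
by have := Hlm.2 rho Hgrho Hne2; rewrite (mdvd_mmul Hdv) => /(not_lt_mmul Hord).
Qed.

End ReducedGB.

Lemma reduced_GB_deg_le R : is_submodule M -> is_graded deg M -> is_reduced_GB lt M R ->
  forall g, List.In g R -> deg_le deg g b.
Proof.
move=> HM Hgr HR g Rg; have [nu [Hlm _]] := HR.2.2 g Rg.
move=> mu Hmu; rewrite (reduced_GB_homog HR Rg Hlm HM Hgr Hmu).
exact: Hmin (reduced_GB_lm_minimal HR Rg Hlm).
Qed.

End DegreeBounds.

Unset Implicit Arguments. Set Strict Implicit.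

Theorem theorem4p7 (K : fieldType) (n m : nat) (deg : 'I_m -> nat)
    (lt : rel (mon n m)) (M : vec K n m -> Prop) (G : seq (vec K n m)) :
  is_submodule M -> is_graded deg M -> is_proper_submod M ->
  is_monomial_order lt ->
  (forall g, Stdlib.Lists.List.In g G -> exists d, homog deg g d) ->
  is_GB lt M (fun g => Stdlib.Lists.List.In g G) ->
  let l := (\max_(j < m) deg j)%N in
  exists (k : nat) (Q : 'I_k -> cone K n m),
    cone_decomp deg Q (NM lt M) /\ q_standard l Q /\
    is_GB lt M (fun g => Stdlib.Lists.List.In g G /\ deg_le deg g (maxn (Pdeg Q).+1 l)) /\
    (forall R, is_reduced_GB lt M R ->
       forall g, Stdlib.Lists.List.In g R -> deg_le deg g (maxn (Pdeg Q).+1 l)).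
Proof.
move=> HM Hgr _ Hord Hhom HGB l.
have [B HB] := seq_exponent_bound (fun g Hg => HM.1 g (HGB.1 g Hg)).
have Hl j : deg j <= l by apply: (@leq_bigmax _ deg j).
have [Q HQ] := std_decomposition_exists HGB HB Hl.
exists (size Q), (cones_of deg Q); rewrite Pdeg_cones_of.
have Hmin := sd_degree HQ.
split; first exact: cone_decomp_cones_of (sd_cover HQ) (sd_disjoint HQ) (sd_standard HQ).
split; first exact: q_standard_cones_of (sd_lstandard HQ).
split; first exact: (GB_truncate Hmin HGB Hhom).
by move=> R; apply: reduced_GB_deg_le Hord Hmin R HM Hgr.
Qed.
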